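(* For an $E$-linear code $C$ of length $2n$, $C^{\perp_{S_L}}=C^{\perp_S}$ if and only if $C$ is left symplectic nice. Equivalently, $C^{\perp_{S_L}}=C^{\perp_S}$ if and only if $C$ is free.
   Context: $E=\langle \kappa,\tau \mid 2\kappa=2\tau=0,\ \kappa^2=\kappa,\ \tau^2=\tau,\ \kappa\tau=\kappa,\ \tau\kappa=\tau\rangle$ is the non-unital ring $\{0,\kappa,\tau,\zeta\}$ ($|E|=4$), $\zeta=\kappa+\tau$, with $e\kappa=e\tau=e$, $e\zeta=0$ for all $e\in E$. Every $e\in E$ is uniquely $u\kappa+v\zeta$ ($u,v\in\mathbb{F}_2$); $\pi(u\kappa+v\zeta)=u$, componentwise. An $E$-linear code of length $2n$ is a left $E$-submodule $C\subseteq E^{2n}$; $C_{Res}=\pi(C)$, $C_{Tor}=\{v\in\mathbb{F}_2^{2n}:\zeta v\in C\}$ (componentwise, $0\cdot\zeta=0,1\cdot\zeta=\zeta$); $C$ is free if $C_{Res}=C_{Tor}$. Symplectic inner product: $\langle (u|v),(u'|v')\rangle_s=\sum_i u_iv'_i+\sum_i v_iu'_i$. $C^{\perp_{S_L}}=\{z\in E^{2n}:\langle z,w\rangle_s=0\ \forall w\in C\}$, $C^{\perp_{S_R}}=\{z\in E^{2n}:\langle w,z\rangle_s=0\ \forall w\in C\}$, $C^{\perp_S}=C^{\perp_{S_L}}\cap C^{\perp_{S_R}}$. $C$ is left symplectic nice if $|C|\,|C^{\perp_{S_L}}|=|E|^{2n}$. *)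

From mathcomp Require Import all_boot all_order.
Set Implicit Arguments. Unset Strict Implicit. Unset Printing Implicit Defensive.

(* The non-unital ring E = {0, kappa, tau, zeta}.  Every element is uniquely
   u*kappa + v*zeta with u, v in F_2; we represent it by the pair (u, v)
   (bool = F_2, addition = xor). *)
Definition E : finType := (bool * bool)%type.

Definition E0 : E := (false, false).
Definition Ekappa : E := (true, false).
Definition Ezeta : E := (false, true).
Definition Etau : E := (true, true).

Definition Eadd (x y : E) : E := (addb x.1 y.1, addb x.2 y.2).
(* e*kappa = e*tau = e, e*zeta = 0, extended bilinearly:
   (u k + v z)(u' k + v' z) = u' (u k + v z). *)
Definition Emul (x y : E) : E := (x.1 && y.1, x.2 && y.1).

Lemma E_rel_kk : Emul Ekappa Ekappa = Ekappa. Proof. by []. Qed.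
Lemma E_rel_tt : Emul Etau Etau = Etau. Proof. by []. Qed.
Lemma E_rel_kt : Emul Ekappa Etau = Ekappa. Proof. by []. Qed.
Lemma E_rel_tk : Emul Etau Ekappa = Etau. Proof. by []. Qed.
Lemma E_zeta : Ezeta = Eadd Ekappa Etau. Proof. by []. Qed.
Lemma E_mul_right (e : E) :
  [/\ Emul e Ekappa = e, Emul e Etau = e & Emul e Ezeta = E0].
Proof. by case: e => [[] []]. Qed.

Definition Epi (x : E) : bool := x.1.
Definition Ezeta_of (b : bool) : E := if b then Ezeta else E0.

(* Words of length 2n over E, written (u | v) with u, v of length n. *)
Definition Eword (n : nat) : finType := ({ffun 'I_n -> E} * {ffun 'I_n -> E})%type.
Definition Bword (n : nat) : finType := ({ffun 'I_n -> bool} * {ffun 'I_n -> bool})%type.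

Definition Ezero_word n : Eword n := ([ffun=> E0], [ffun=> E0]).
Definition Eword_add n (x y : Eword n) : Eword n :=
  ([ffun i => Eadd (x.1 i) (y.1 i)], [ffun i => Eadd (x.2 i) (y.2 i)]).
Definition Eword_scale n (e : E) (x : Eword n) : Eword n :=
  ([ffun i => Emul e (x.1 i)], [ffun i => Emul e (x.2 i)]).

Definition E_linear_code n (C : {set Eword n}) : Prop :=
  [/\ Ezero_word n \in C,
      (forall x y, x \in C -> y \in C -> Eword_add x y \in C) &
      (forall e x, x \in C -> Eword_scale e x \in C)].

Definition sympl n (x y : Eword n) : E :=
  Eadd (\big[Eadd/E0]_(i < n) Emul (x.1 i) (y.2 i))
       (\big[Eadd/E0]_(i < n) Emul (x.2 i) (y.1 i)).

Definition sympl_dual_L n (C : {set Eword n}) : {set Eword n} :=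
  [set z | [forall w in C, sympl z w == E0]].
Definition sympl_dual_R n (C : {set Eword n}) : {set Eword n} :=
  [set z | [forall w in C, sympl w z == E0]].
Definition sympl_dual n (C : {set Eword n}) : {set Eword n} :=
  sympl_dual_L C :&: sympl_dual_R C.

Definition left_symplectic_nice n (C : {set Eword n}) : Prop :=
  #|C| * #|sympl_dual_L C| = #|E| ^ (2 * n).

Definition Eword_pi n (x : Eword n) : Bword n :=
  ([ffun i => Epi (x.1 i)], [ffun i => Epi (x.2 i)]).
Definition Bword_zeta n (b : Bword n) : Eword n :=
  ([ffun i => Ezeta_of (b.1 i)], [ffun i => Ezeta_of (b.2 i)]).

Definition C_Res n (C : {set Eword n}) : {set Bword n} := (@Eword_pi n) @: C.
Definition C_Tor n (C : {set Eword n}) : {set Bword n} :=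
  [set v | Bword_zeta v \in C].

Definition free_code n (C : {set Eword n}) : Prop := C_Res C = C_Tor C.

(* Write z in E^(2n) as u kappa + v zeta with u = pi(z) and v = Eword_zcoef z
   in F_2^(2n).  Since e kappa = e and e zeta = 0,
   <z, w>_s = <pi z, pi w> kappa + <v, pi w> zeta only sees the residue of w.
   For an E-linear code C this gives C = {u kappa + v zeta | u in Res, v in Tor}
   with Res <= Tor, left dual {u kappa + v zeta | u, v in Res^perp} and right
   dual {z | pi z in Tor^perp}.  So the left dual is the two-sided one iff
   Res^perp <= Tor^perp, and |C| |left dual| = |Res| |Tor| |Res^perp|^2.  The
   binary symplectic form is nondegenerate, so a character sum gives
   |D| |D^perp| = 4^n for every binary linear code D; both conditions thus
   reduce to |Res| = |Tor|, i.e. to freeness. *)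

From mathcomp Require Import all_boot all_algebra zify.
Set Implicit Arguments. Unset Strict Implicit. Unset Printing Implicit Defensive.
Import GRing.Theory.

Lemma sum_sign_involution (T : finType) (P : pred T) (F : T -> int) (g : T -> T) :
  involutive g -> {mono g : x / P x} -> {in P, forall x, F (g x) = - F x}%R ->
  (\sum_(x | P x) F x = 0)%R.
Proof.
move=> gK Pg Fg.
have sum_oppE : (\sum_(x | P x) F x = - \sum_(x | P x) F x)%R.
  rewrite {1}(reindex_inj (inv_inj gK)) -sumrN.
  by apply: eq_big => [x | x]; rewrite Pg // => /Fg.
lia.
Qed.

Section BinarySymplectic.
Variable n : nat.
Local Notation BW := (Bword n).

Definition Bword0 : BW := ([ffun=> false], [ffun=> false]).
Definition Bword_add (x y : BW) : BW :=
  ([ffun i => x.1 i (+) y.1 i], [ffun i => x.2 i (+) y.2 i]).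

Definition bsympl (x y : BW) : bool :=
  (\big[addb/false]_(i < n) (x.1 i && y.2 i)) (+)
  (\big[addb/false]_(i < n) (x.2 i && y.1 i)).

Definition bsympl_dual (D : {set BW}) : {set BW} :=
  [set y | [forall x in D, ~~ bsympl y x]].

Definition binary_linear_code (D : {set BW}) : Prop :=
  Bword0 \in D /\ forall x y, x \in D -> y \in D -> Bword_add x y \in D.

Lemma Bword_addK y : involutive (Bword_add^~ y).
Proof.
by case=> a b; congr pair; apply/ffunP => i; rewrite !ffunE -addbA addbb addbF.
Qed.

Lemma bsymplC x y : bsympl x y = bsympl y x.
Proof. by rewrite /bsympl addbC; congr addb; apply: eq_bigr => i _; rewrite andbC. Qed.

Lemma bsymplDl x z y : bsympl (Bword_add x z) y = bsympl x y (+) bsympl z y.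
Proof.
have sum_addb (f g h : {ffun 'I_n -> bool}) :
    \big[addb/false]_(i < n) ([ffun i => f i (+) g i] i && h i) =
    \big[addb/false]_(i < n) (f i && h i) (+) \big[addb/false]_(i < n) (g i && h i).
  by rewrite -big_split; apply: eq_bigr => i _; rewrite ffunE andb_addl.
by rewrite /bsympl !sum_addb addbACA.
Qed.

Lemma bsymplDr x y z : bsympl x (Bword_add y z) = bsympl x y (+) bsympl x z.
Proof. by rewrite bsymplC bsymplDl !(bsymplC x). Qed.

Lemma bsympl0l y : bsympl Bword0 y = false.
Proof. by rewrite /bsympl !big1 // => i _; rewrite ffunE. Qed.

Lemma bsympl_nondegenerate x : x != Bword0 -> exists y, bsympl x y.
Proof.
have sum_delta (f : {ffun 'I_n -> bool}) i :
    \big[addb/false]_(j < n) (f j && [ffun j => j == i] j) = f i.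
  rewrite (bigD1 i) //= ffunE eqxx andbT big1 ?addbF // => j /negPf ji.
  by rewrite ffunE ji andbF.
have sum_false (f : {ffun 'I_n -> bool}) :
    \big[addb/false]_(j < n) (f j && [ffun=> false] j) = false.
  by rewrite big1 // => j _; rewrite ffunE andbF.
case: x => a b x_neq0.
have [i ai | a0] := pickP a.
  by exists ([ffun=> false], [ffun j => j == i]); rewrite /bsympl sum_delta sum_false ai.
have [i bi | b0] := pickP b.
  by exists ([ffun j => j == i], [ffun=> false]); rewrite /bsympl sum_delta sum_false bi.
by case/eqP: x_neq0; congr pair; apply/ffunP => i; rewrite ffunE ?a0 ?b0.
Qed.

Lemma bsympl_dualS (D1 D2 : {set BW}) :
  D1 \subset D2 -> bsympl_dual D2 \subset bsympl_dual D1.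
Proof.
move=> /subsetP D12; apply/subsetP => y; rewrite !inE => /forall_inP y_orth.
by apply/forall_inP => x /D12; apply: y_orth.
Qed.

Lemma Bword0_bsympl_dual (D : {set BW}) : Bword0 \in bsympl_dual D.
Proof. by rewrite inE; apply/forall_inP => x _; rewrite bsympl0l. Qed.

Section Duality.
Local Open Scope ring_scope.
Variable D : {set BW}.
Hypothesis D_linear : binary_linear_code D.

Let character_sum : int := \sum_(y : BW) \sum_(x in D) (-1) ^+ bsympl x y.

Lemma character_sum_dual : character_sum = (#|D| * #|bsympl_dual D|)%N%:Z.
Proof.
case: D_linear => _ D_add.
have inner_sum y : \sum_(x in D) (-1) ^+ bsympl x y =
                   if y \in bsympl_dual D then #|D|%:Z else 0.
  have [y_orth | ] := boolP (y \in bsympl_dual D).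
    rewrite (eq_bigr (fun _ => 1)) => [|x xD]; first by rewrite sumr_const natz.
    by move: y_orth; rewrite inE bsymplC => /forall_inP/(_ x xD)/negPf ->.
  rewrite inE negb_forall_in => /exists_inP [x0 x0D /negPn y_x0].
  apply: (sum_sign_involution (Bword_addK x0)) => [x | x _].
    by apply/idP/idP => [/D_add-/(_ x0 x0D) | xD]; [rewrite Bword_addK | exact: D_add].
  by rewrite bsymplDl (bsymplC x0) y_x0 signr_addb expr1 mulrN1.
rewrite /character_sum (eq_bigr _ (fun y _ => inner_sum y)) -big_mkcond /=.
by rewrite sumr_const -[#|D|%:Z]natz -mulrnA natz.
Qed.

Lemma character_sum_total : character_sum = #|BW|%:Z.
Proof.
case: D_linear => D0 _.
rewrite /character_sum exchange_big (bigD1 Bword0) //= [X in _ + X]big1.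
  by rewrite addr0 (eq_bigr (fun _ => 1)) => [|y _]; rewrite ?sumr_const ?natz ?bsympl0l.
move=> x /andP [_ x_neq0].
have [y0 x_y0] := bsympl_nondegenerate x_neq0.
apply: (sum_sign_involution (Bword_addK y0)) => // y _.
by rewrite bsymplDr x_y0 signr_addb expr1 mulrN1.
Qed.

Lemma card_bsympl_dual : (#|D| * #|bsympl_dual D| = #|BW|)%N.
Proof. by apply/eqP; rewrite -eqz_nat -character_sum_dual character_sum_total. Qed.

End Duality.

Lemma bsympl_dual_sub_eq (D1 D2 : {set BW}) :
  binary_linear_code D1 -> binary_linear_code D2 -> D1 \subset D2 ->
  bsympl_dual D1 \subset bsympl_dual D2 <-> D1 = D2.
Proof.
move=> D1_lin D2_lin D12; split => [dual12 | <-//].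
have dual_eq : bsympl_dual D1 = bsympl_dual D2.
  by apply/eqP; rewrite eqEsubset dual12 bsympl_dualS.
have dual_gt0 : 0 < #|bsympl_dual D1|.
  by apply/card_gt0P; exists Bword0; apply: Bword0_bsympl_dual.
apply/eqP; rewrite eqEcard D12 -(leq_pmul2r dual_gt0) card_bsympl_dual //=.
by rewrite dual_eq card_bsympl_dual.
Qed.

End BinarySymplectic.

Arguments Bword0 {n}.

Section EwordCoefficients.
Variable n : nat.
Local Notation BW := (Bword n).
Local Notation EW := (Eword n).

Definition Eword_zcoef (z : EW) : BW := ([ffun i => (z.1 i).2], [ffun i => (z.2 i).2]).

Definition Eword_of_coefs (u v : BW) : EW :=
  ([ffun i => (u.1 i, v.1 i)], [ffun i => (u.2 i, v.2 i)]).

Lemma Eword_pi_of_coefs (u v : BW) : Eword_pi (Eword_of_coefs u v) = u.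
Proof. by case: u => a b; congr pair; apply/ffunP => i; rewrite !ffunE. Qed.

Lemma Eword_zcoef_of_coefs (u v : BW) : Eword_zcoef (Eword_of_coefs u v) = v.
Proof. by case: v => a b; congr pair; apply/ffunP => i; rewrite !ffunE. Qed.

Lemma Eword_coefsK (z : EW) : Eword_of_coefs (Eword_pi z) (Eword_zcoef z) = z.
Proof. by case: z => a b; congr pair; apply/ffunP => i; rewrite !ffunE; case: (_ i). Qed.

Lemma card_Eword_coefs (A : {set EW}) (X Y : {set BW}) :
    (forall z, (z \in A) = (Eword_pi z \in X) && (Eword_zcoef z \in Y)) ->
  #|A| = #|X| * #|Y|.
Proof.
move=> memA; rewrite -cardsX.
have coefsK : cancel (fun p : BW * BW => Eword_of_coefs p.1 p.2)
                     (fun z => (Eword_pi z, Eword_zcoef z)).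
  by move=> [u v]; rewrite /= Eword_pi_of_coefs Eword_zcoef_of_coefs.
rewrite -(card_imset _ (can_inj coefsK)); apply: eq_card => z.
apply/idP/imsetP => [zA | [[u v] uvXY ->]].
  by exists (Eword_pi z, Eword_zcoef z); rewrite ?in_setX -?memA ?Eword_coefsK.
by rewrite memA Eword_pi_of_coefs Eword_zcoef_of_coefs -in_setX.
Qed.

Lemma card_Eword : #|E| ^ (2 * n) = #|BW| * #|BW|.
Proof. by rewrite !card_prod !card_ffun !card_bool card_ord expnM -!expnMn. Qed.

Lemma sympl_coefs (z w : EW) :
  sympl z w = (bsympl (Eword_pi z) (Eword_pi w), bsympl (Eword_zcoef z) (Eword_pi w)).
Proof.
have big_fst F : (\big[Eadd/E0]_(i < n) F i).1 = \big[addb/false]_(i < n) (F i).1.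
  by elim/big_rec2: _ => //= i a b _ ->.
have big_snd F : (\big[Eadd/E0]_(i < n) F i).2 = \big[addb/false]_(i < n) (F i).2.
  by elim/big_rec2: _ => //= i a b _ ->.
rewrite [LHS]surjective_pairing /sympl /bsympl /= !big_fst !big_snd.
by congr (_, _); congr addb; apply: eq_bigr => i _; rewrite !ffunE.
Qed.

Lemma Bword_zetaE (t : BW) : Bword_zeta t = Eword_of_coefs Bword0 t.
Proof. by congr pair; apply/ffunP => i; rewrite !ffunE; case: (_ i). Qed.

Lemma Eword_scale_zeta (z : EW) : Eword_scale Ezeta z = Bword_zeta (Eword_pi z).
Proof. by congr pair; apply/ffunP => i; rewrite !ffunE; case: (_ i) => [[] []]. Qed.

Lemma Eword_add_scale_kappa (z : EW) :
  Eword_add z (Eword_scale Ekappa z) = Bword_zeta (Eword_zcoef z).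
Proof. by congr pair; apply/ffunP => i; rewrite !ffunE; case: (_ i) => [[] []]. Qed.

Lemma Eword_add_kappa_zeta (w : EW) (v : BW) :
  Eword_add (Eword_scale Ekappa w) (Bword_zeta v) = Eword_of_coefs (Eword_pi w) v.
Proof.
by congr pair; apply/ffunP => i; rewrite !ffunE; case: (_ i) => [[] []]; case: (_ i).
Qed.

Lemma Eword_pi_add (z w : EW) :
  Eword_pi (Eword_add z w) = Bword_add (Eword_pi z) (Eword_pi w).
Proof. by congr pair; apply/ffunP => i; rewrite !ffunE. Qed.

Lemma Bword_zeta_add (u v : BW) :
  Bword_zeta (Bword_add u v) = Eword_add (Bword_zeta u) (Bword_zeta v).
Proof. by congr pair; apply/ffunP => i; rewrite !ffunE; do 2!case: (_ i). Qed.

Lemma Eword_pi0 : Eword_pi (Ezero_word n) = Bword0.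
Proof. by congr pair; apply/ffunP => i; rewrite !ffunE. Qed.

Lemma Bword_zeta0 : Bword_zeta Bword0 = Ezero_word n.
Proof. by congr pair; apply/ffunP => i; rewrite !ffunE. Qed.

End EwordCoefficients.

Section SymplecticDuals.
Variables (n : nat) (C : {set Eword n}).
Hypothesis C_linear : E_linear_code C.
Local Notation Res := (C_Res C).
Local Notation Tor := (C_Tor C).

Lemma Eword_pi_Tor z : z \in C -> Eword_pi z \in Tor.
Proof. by case: C_linear => _ _ C_scale zC; rewrite inE -Eword_scale_zeta C_scale. Qed.

Lemma Res_sub_Tor : Res \subset Tor.
Proof. by apply/subsetP => _ /imsetP [z zC ->]; apply: Eword_pi_Tor. Qed.

Lemma Eword_zcoef_Tor z : z \in C -> Eword_zcoef z \in Tor.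
Proof.
by case: C_linear => _ C_add C_scale zC; rewrite inE -Eword_add_scale_kappa C_add ?C_scale.
Qed.

Lemma mem_codeE z : (z \in C) = (Eword_pi z \in Res) && (Eword_zcoef z \in Tor).
Proof.
case: C_linear => _ C_add C_scale.
apply/idP/andP => [zC | [/imsetP [w wC pi_zw] zT]].
  by rewrite imset_f ?Eword_zcoef_Tor.
rewrite inE in zT.
by rewrite -[z]Eword_coefsK pi_zw -Eword_add_kappa_zeta C_add ?C_scale.
Qed.

Lemma Res_linear : binary_linear_code Res.
Proof.
case: C_linear => C0 C_add _; split; first by rewrite -Eword_pi0 imset_f.
by move=> _ _ /imsetP [z zC ->] /imsetP [w wC ->]; rewrite -Eword_pi_add imset_f ?C_add.
Qed.

Lemma Tor_linear : binary_linear_code Tor.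
Proof.
case: C_linear => C0 C_add _; split; first by rewrite inE Bword_zeta0.
by move=> u v; rewrite !inE Bword_zeta_add; apply: C_add.
Qed.

Lemma mem_sympl_dual_L z : (z \in sympl_dual_L C) =
  (Eword_pi z \in bsympl_dual Res) && (Eword_zcoef z \in bsympl_dual Res).
Proof.
rewrite !inE; apply/forall_inP/andP => [z_orth | ].
  have orth w : w \in C -> ~~ bsympl (Eword_pi z) (Eword_pi w) &&
                            ~~ bsympl (Eword_zcoef z) (Eword_pi w).
    by move/z_orth; rewrite sympl_coefs xpair_eqE !eqbF_neg.
  by split; apply/forall_inP => _ /imsetP [w /orth /andP [? ?] ->].
move=> [/forall_inP pi_orth /forall_inP zc_orth] w wC.
by rewrite sympl_coefs (negPf (pi_orth _ _)) ?(negPf (zc_orth _ _)) ?imset_f.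
Qed.

Lemma mem_sympl_dual_R z : (z \in sympl_dual_R C) = (Eword_pi z \in bsympl_dual Tor).
Proof.
rewrite !inE; apply/forall_inP/forall_inP => [z_orth t | pi_orth w wC].
  rewrite inE => /z_orth; rewrite sympl_coefs Bword_zetaE Eword_zcoef_of_coefs.
  by rewrite xpair_eqE => /andP [_ /eqP]; rewrite bsymplC => ->.
rewrite sympl_coefs !(bsymplC _ (Eword_pi z)).
by rewrite (negPf (pi_orth _ _)) ?(negPf (pi_orth _ _)) ?Eword_pi_Tor ?Eword_zcoef_Tor.
Qed.

Lemma card_code : #|C| = #|Res| * #|Tor|.
Proof. exact: card_Eword_coefs mem_codeE. Qed.

Lemma card_sympl_dual_L : #|sympl_dual_L C| = #|bsympl_dual Res| * #|bsympl_dual Res|.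
Proof. exact: card_Eword_coefs mem_sympl_dual_L. Qed.

Lemma free_code_card : free_code C <-> #|Tor| = #|Res|.
Proof.
split => [-> // | card_eq]; apply/eqP.
by rewrite eqEcard Res_sub_Tor card_eq leqnn.
Qed.

Lemma sympl_dual_L_eq_dual :
  sympl_dual_L C = sympl_dual C <-> bsympl_dual Res \subset bsympl_dual Tor.
Proof.
split => [dual_eq | dual_sub].
  apply/subsetP => u u_orth.
  have : Eword_of_coefs u Bword0 \in sympl_dual C.
    by rewrite -dual_eq mem_sympl_dual_L Eword_pi_of_coefs Eword_zcoef_of_coefs
               u_orth Bword0_bsympl_dual.
  by rewrite in_setI mem_sympl_dual_R Eword_pi_of_coefs => /andP [].
apply/setP => z; rewrite in_setI; have [zL | //] := boolP (z \in sympl_dual_L C).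
by move: zL; rewrite mem_sympl_dual_L mem_sympl_dual_R => /andP [/(subsetP dual_sub)].
Qed.

Lemma sympl_dual_L_eq_free : sympl_dual_L C = sympl_dual C <-> free_code C.
Proof.
rewrite sympl_dual_L_eq_dual.
exact: bsympl_dual_sub_eq Res_linear Tor_linear Res_sub_Tor.
Qed.

Lemma left_symplectic_nice_free : left_symplectic_nice C <-> free_code C.
Proof.
rewrite free_code_card /left_symplectic_nice card_code card_sympl_dual_L card_Eword.
rewrite -(card_bsympl_dual Res_linear).
have Res_gt0 : 0 < #|Res| by apply/card_gt0P; exists Bword0; case: Res_linear.
have dual_gt0 : 0 < #|bsympl_dual Res|.
  by apply/card_gt0P; exists Bword0; apply: Bword0_bsympl_dual.
have scale_gt0 : 0 < #|Res| * #|bsympl_dual Res| * #|bsympl_dual Res|.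
  by rewrite !muln_gt0 Res_gt0 dual_gt0.
split => [card_eq | ->]; last by lia.
by apply/eqP; rewrite -(eqn_pmul2l scale_gt0); apply/eqP; lia.
Qed.

End SymplecticDuals.

Theorem mainTheorem10 (n : nat) (C : {set Eword n}) :
  E_linear_code C ->
  (sympl_dual_L C = sympl_dual C <-> left_symplectic_nice C) /\
  (sympl_dual_L C = sympl_dual C <-> free_code C).
Proof.
move=> C_linear; have dual_free := sympl_dual_L_eq_free C_linear.
by rewrite dual_free left_symplectic_nice_free.
Qed.
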